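(* Let $\mathbf{B},\mathbf{C}$ be structures over a signature $\sigma$ such that $\mathbf{C}$ is a substructure of $\mathbf{B}$ and there exists a retraction $h$ from $\mathbf{B}$ to $\mathbf{C}$. Then for every subset $S\subseteq\mathrm{dom}(\mathbf{B})$ and every structure $\mathbf{D}$ over $\sigma$, $|\mathrm{homs}(\mathbf{B},S,\mathbf{D})|\ge|\mathrm{homs}(\mathbf{C},S\cap\mathrm{dom}(\mathbf{C}),\mathbf{D})|$.
   Context: A structure $\mathbf{A}$ over a signature $\sigma$ (finite set of relation symbols with arities) has a finite universe $\mathrm{dom}(\mathbf{A})$ and relations $R^{\mathbf{A}}\subseteq\mathrm{dom}(\mathbf{A})^{\mathrm{ar}(R)}$. A homomorphism $\mathbf{A}\to\mathbf{D}$ is a map $g:\mathrm{dom}(\mathbf{A})\to\mathrm{dom}(\mathbf{D})$ with $g(\bar t)\in R^{\mathbf{D}}$ for all $\bar t\in R^{\mathbf{A}}$, $R\in\sigma$. $\mathbf{C}$ is a substructure of $\mathbf{B}$ if $\mathrm{dom}(\mathbf{C})\subseteq\mathrm{dom}(\mathbf{B})$ and $R^{\mathbf{C}}\subseteq R^{\mathbf{B}}$ for all $R\in\sigma$. A retraction from $\mathbf{B}$ to a substructure $\mathbf{C}$ is a homomorphism $\mathbf{B}\to\mathbf{C}$ that is the identity on $\mathrm{dom}(\mathbf{C})$. For $S\subseteq\mathrm{dom}(\mathbf{A})$, $\mathrm{homs}(\mathbf{A},S,\mathbf{D})=\{g|_S : g \text{ a homomorphism } \mathbf{A}\to\mathbf{D}\}$.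 *)

From mathcomp Require Import all_boot.
Set Implicit Arguments. Unset Strict Implicit. Unset Printing Implicit Defensive.

Record signature := Signature { sym : finType; ar : sym -> nat }.

(* A structure over sig whose universe is a (finite) subset [sdom] of an
   ambient finite type T; relations are sets of (ar R)-tuples over T,
   required to consist of tuples of elements of [sdom]. *)
Record structure (sig : signature) (T : finType) := Structure {
  sdom : {set T};
  srel : forall R : sym sig, {set (ar R).-tuple T};
  swf : [forall R : sym sig, forall t in srel R, forall i, tnth t i \in sdom]
}.

(* A homomorphism A -> D, represented as a map defined exactly on dom(A)
   (value None outside dom(A)); g x = Some y means "x is mapped to y". *)
Definition is_hom (sig : signature) (T U : finType)
  (A : structure sig T) (D : structure sig U) (g : {ffun T -> option U}) : bool :=
  [forall x, (x \notin sdom A) ==> (g x == None)] &&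
  [forall x in sdom A, if g x is Some y then y \in sdom D else false] &&
  [forall R : sym sig, forall t in srel A R,
     [exists t' in srel D R, forall i, g (tnth t i) == Some (tnth t' i)]].

Definition substructure (sig : signature) (T : finType)
  (C B : structure sig T) : Prop :=
  sdom C \subset sdom B /\ forall R, srel C R \subset srel B R.

Definition retraction (sig : signature) (T : finType)
  (B C : structure sig T) (h : {ffun T -> option T}) : Prop :=
  is_hom B C h /\ forall x, x \in sdom C -> h x = Some x.

Definition restrict (T U : finType) (S : {set T}) (g : {ffun T -> option U})
  : {ffun T -> option U} := [ffun x => if x \in S then g x else None].

Definition homs (sig : signature) (T U : finType)
  (A : structure sig T) (S : {set T}) (D : structure sig U)
  : {set {ffun T -> option U}} :=
  [set f | [exists g, is_hom A D g && (f == restrict S g)]].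

From mathcomp Require Import all_boot.
Set Implicit Arguments. Unset Strict Implicit. Unset Printing Implicit Defensive.

(* Precomposing with the retraction turns every homomorphism C -> D into a
   homomorphism B -> D that agrees with it on dom(C); hence restricting to
   S ∩ dom(C) maps homs(B, S, D) onto a superset of homs(C, S ∩ dom(C), D). *)

Definition pcomp (T U V : finType) (h : {ffun T -> option U})
  (g : {ffun U -> option V}) : {ffun T -> option V} :=
  [ffun x => obind g (h x)].

Lemma is_hom_pcomp (sig : signature) (T U V : finType) (A : structure sig T)
  (B : structure sig U) (D : structure sig V)
  (h : {ffun T -> option U}) (g : {ffun U -> option V}) :
  is_hom A B h -> is_hom B D g -> is_hom A D (pcomp h g).
Proof.
move=> /andP[/andP[/forallP h_out /forall_inP h_in] /forallP h_rel].
move=> /andP[/andP[_ /forall_inP g_in] /forallP g_rel].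
apply/andP; split; first (apply/andP; split).
- apply/forallP => x; apply/implyP => xA; rewrite ffunE.
  by move: (h_out x); rewrite xA => /eqP ->.
- apply/forall_inP => x xA; rewrite ffunE.
  by move: (h_in x xA); case: (h x) => // y /g_in.
- apply/forallP => R; apply/forall_inP => t tA.
  have /exists_inP[t' t'B /forallP ht'] := forall_inP (h_rel R) t tA.
  have /exists_inP[t'' t''D /forallP gt''] := forall_inP (g_rel R) t' t'B.
  apply/exists_inP; exists t'' => //; apply/forallP => i.
  by rewrite ffunE (eqP (ht' i)) /= (gt'' i).
Qed.

Lemma restrict_restrict (T U : finType) (S A : {set T})
  (g : {ffun T -> option U}) :
  restrict A (restrict S g) = restrict (S :&: A) g.
Proof.
by apply/ffunP => x; rewrite !ffunE inE; case: (x \in A); rewrite ?andbF ?andbT.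
Qed.

Lemma restrict_pcomp_id (T U : finType) (A : {set T})
  (h : {ffun T -> option T}) (g : {ffun T -> option U}) :
  (forall x, x \in A -> h x = Some x) -> restrict A (pcomp h g) = restrict A g.
Proof.
by move=> hA; apply/ffunP => x; rewrite !ffunE; case: ifP => // /hA ->.
Qed.

Lemma homs_sub_restrict_homs (sig : signature) (T U : finType)
  (B C : structure sig T) (h : {ffun T -> option T}) (S : {set T})
  (D : structure sig U) :
  retraction B C h ->
  homs C (S :&: sdom C) D \subset restrict (S :&: sdom C) @: homs B S D.
Proof.
move=> [hom_h h_id]; apply/subsetP => f.
rewrite inE => /existsP[g /andP[hom_g /eqP ->]].
apply/imsetP; exists (restrict S (pcomp h g)).
  by rewrite inE; apply/existsP; exists (pcomp h g);
    rewrite eqxx andbT (is_hom_pcomp hom_h).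
rewrite restrict_restrict setIA setIid restrict_pcomp_id // => x.
by rewrite inE => /andP[_ /h_id].
Qed.

Theorem lemma5p4 (sig : signature) (T : finType) (B C : structure sig T)
  (h : {ffun T -> option T}) :
  substructure C B -> retraction B C h ->
  forall (S : {set T}), S \subset sdom B ->
  forall (U : finType) (D : structure sig U),
  #|homs B S D| >= #|homs C (S :&: sdom C) D|.
Proof.
move=> _ retr S _ U D.
apply: leq_trans (leq_imset_card (restrict (S :&: sdom C)) (homs B S D)).
exact/subset_leq_card/(homs_sub_restrict_homs S D retr).
Qed.
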